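(* For all integers $a,b\ge 0$, $\ell_{\rm leaf}(a,0)\,\ell_{\rm leaf}(0,b)\ge\ell_{\rm leaf}(a,b)$.
   Context: Fix $\rho^1,\rho^0>0$ and let $B$ denote the Beta function. Define $\ell_{\rm leaf}(c^1,c^0)=\dfrac{B(c^1+\rho^1,\,c^0+\rho^0)}{B(\rho^1,\rho^0)}$ for integers $c^1,c^0\ge0$. *)

From mathcomp Require Import all_boot all_order all_algebra.
From mathcomp Require Import all_classical all_reals all_analysis.
Import Order.TTheory GRing.Theory Num.Theory.
Local Open Scope classical_set_scope.
Local Open Scope ring_scope.

Definition Beta (R : realType) (x y : R) : R :=
  Rintegral (@lebesgue_measure R) `[0%R, 1%R]
    (fun t => powR t (x - 1) * powR (1 - t) (y - 1)).

Definition l_leaf (R : realType) (rho1 rho0 : R) (c1 c0 : nat) : R :=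
  @Beta R (c1%:R + rho1) (c0%:R + rho0) / @Beta R rho1 rho0.

From mathcomp Require Import all_boot all_order all_algebra.
From mathcomp Require Import all_classical all_reals all_analysis.
From mathcomp Require Import lra ring.
From mathcomp Require Import measurable_realfun.
Import Order.TTheory GRing.Theory Num.Theory.
Local Open Scope ring_scope.

(* Write w(t) = t^(rho1-1) (1-t)^(rho0-1) on [0,1], so that
   B(a+rho1, b+rho0) = int t^a (1-t)^b w.  The claim is Chebyshev's inequality
   for the increasing t^a and the decreasing (1-t)^b against the weight w, and
   one integral suffices to prove it: if m is the w-mean of t^a and c in [0,1]
   satisfies c^a = m, then (t^a - m) ((1-t)^b - (1-c)^b) <= 0 on [0,1], and
   integrating against w, where int (t^a - m) w = 0, gives
   int t^a (1-t)^b w <= m int (1-t)^b w. *)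

Section integral_pivot.
Context {d : measure_display} {T : measurableType d} {R : realType}.
Variables (mu : {measure set T -> \bar R}) (D : set T) (f g w : T -> R).
Hypothesis mD : measurable D.
Hypotheses (mf : measurable_fun D f) (mg : measurable_fun D g)
  (mw : measurable_fun D w).
Hypotheses (f_ge0 : forall t, D t -> 0 <= f t) (g_ge0 : forall t, D t -> 0 <= g t)
  (w_ge0 : forall t, D t -> 0 <= w t).

Let ge0_integral_comb (k1 k2 : R) (h1 h2 : T -> R) : 0 <= k1 -> 0 <= k2 ->
    measurable_fun D h1 -> measurable_fun D h2 ->
    (forall t, D t -> 0 <= h1 t) -> (forall t, D t -> 0 <= h2 t) ->
  (\int[mu]_(t in D) (k1 * h1 t + k2 * h2 t)%R%:E
     = k1%:E * \int[mu]_(t in D) (h1 t)%:E + k2%:E * \int[mu]_(t in D) (h2 t)%:E)%E.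
Proof.
move=> k1_ge0 k2_ge0 mh1 mh2 h1_ge0 h2_ge0.
under eq_integral do rewrite EFinD.
rewrite ge0_integralD //; last 4 first.
- by move=> t Dt; rewrite lee_fin mulr_ge0 ?h1_ge0.
- exact/measurable_EFinP/measurable_funM.
- by move=> t Dt; rewrite lee_fin mulr_ge0 ?h2_ge0.
- exact/measurable_EFinP/measurable_funM.
under eq_integral do rewrite EFinM.
under [X in (_ + X)%E]eq_integral do rewrite EFinM.
by rewrite !ge0_integralZl_EFin //; exact/measurable_EFinP.
Qed.

Lemma ge0_integral_le_pivot (fm : R) : 0 <= fm ->
  (exists2 gm, 0 <= gm & forall t, D t -> (f t - fm) * (g t - gm) <= 0) ->
  (\int[mu]_(t in D) (w t)%:E)%E \is a fin_num ->
  (fm%:E * \int[mu]_(t in D) (w t)%:E = \int[mu]_(t in D) (f t * w t)%R%:E)%E ->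
  (\int[mu]_(t in D) (f t * g t * w t)%R%:E
     <= fm%:E * \int[mu]_(t in D) (g t * w t)%R%:E)%E.
Proof.
move=> fm_ge0 [gm gm_ge0 opposite] w_fin fm_mean.
have fgw_ge0 t : D t -> 0 <= f t * g t * w t.
  by move=> Dt; rewrite !mulr_ge0 ?f_ge0 ?g_ge0 ?w_ge0.
have fw_ge0 t : D t -> 0 <= f t * w t by move=> Dt; rewrite mulr_ge0 ?f_ge0 ?w_ge0.
have gw_ge0 t : D t -> 0 <= g t * w t by move=> Dt; rewrite mulr_ge0 ?g_ge0 ?w_ge0.
have mfw : measurable_fun D (fun t => f t * w t) := measurable_funM mf mw.
have mgw : measurable_fun D (fun t => g t * w t) := measurable_funM mg mw.
have mfgw : measurable_fun D (fun t => f t * g t * w t).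
  exact: measurable_funM (measurable_funM mf mg) mw.
(* The factor 1 puts both sides in the shape of [ge0_integral_comb]. *)
have pointwise : (\int[mu]_(t in D) (1 * (f t * g t * w t) + fm * gm * w t)%R%:E
    <= \int[mu]_(t in D) (gm * (f t * w t) + fm * (g t * w t))%R%:E)%E.
  apply: ge0_le_integral => //.
  - by move=> t Dt; rewrite lee_fin addr_ge0 ?mul1r ?fgw_ge0 ?mulr_ge0 ?w_ge0.
  - by apply/measurable_EFinP/measurable_funD; exact: measurable_funM.
  - by apply/measurable_EFinP/measurable_funD; exact: measurable_funM.
  move=> t Dt; rewrite lee_fin -subr_ge0.
  have -> : gm * (f t * w t) + fm * (g t * w t)
            - (1 * (f t * g t * w t) + fm * gm * w t)
          = - ((f t - fm) * (g t - gm) * w t) by ring.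
  by rewrite oppr_ge0 mulr_le0_ge0 ?opposite ?w_ge0.
rewrite !ge0_integral_comb ?mulr_ge0 ?mul1e // in pointwise.
(* gm int f w = (fm gm) int w is finite and cancels on both sides. *)
rewrite -fm_mean muleA -EFinM [gm * fm]mulrC [X in (_ <= X)%E]addeC in pointwise.
by move: pointwise; rewrite leeD2rE // fin_numM.
Qed.

End integral_pivot.

Lemma powR_natD {R : realType} (t p : R) (n : nat) : 0 <= t -> 0 < p ->
  t `^ (n%:R + p - 1) = t ^+ n * t `^ (p - 1).
Proof.
move=> t_ge0 p_gt0; case: n => [|n]; first by rewrite add0r expr0 mul1r.
have n_p_gt0 : 0 < n.+1%:R + (p - 1) :> R.
  have : 1 <= n.+1%:R :> R by rewrite ler1n.
  lra.
by rewrite -addrA (@powRD _ t n.+1%:R) ?powR_mulrn // gt_eqF.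
Qed.

Lemma powers_oppositely_ordered {R : realDomainType} (a b : nat) (t c : R) :
  0 <= t <= 1 -> 0 <= c <= 1 ->
  (t ^+ a - c ^+ a) * ((1 - t) ^+ b - (1 - c) ^+ b) <= 0.
Proof.
move=> /andP[t_ge0 t_le1] /andP[c_ge0 c_le1].
have [t_le_c|c_lt_t] := lerP t c.
  apply: mulr_le0_ge0; rewrite ?subr_le0 ?subr_ge0;
    by apply: lerXn2r; rewrite ?nnegrE //; lra.
apply: mulr_ge0_le0; rewrite ?subr_le0 ?subr_ge0;
  by apply: lerXn2r; rewrite ?nnegrE //; lra.
Qed.

Lemma exprn_unit_interval_onto {R : realType} (n : nat) (x : R) :
  (0 < n)%N -> 0 <= x <= 1 -> exists2 c : R, 0 <= c <= 1 & c ^+ n = x.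
Proof.
move=> n_gt0 /andP[x_ge0 x_le1].
have root_powE : (x `^ n%:R^-1) ^+ n = x.
  by rewrite -powR_mulrn ?powR_ge0 // -powRrM mulVf ?powRr1 // pnatr_eq0 -lt0n.
exists (x `^ n%:R^-1) => //.
by rewrite powR_ge0 -(expr_le1 n_gt0) ?powR_ge0 // root_powE.
Qed.

Section beta_integral.
Context {R : realType}.
Local Open Scope classical_set_scope.

Definition beta_integrand (p q t : R) : R := t `^ (p - 1) * (1 - t) `^ (q - 1).

Definition beta_integral (p q : R) : \bar R :=
  (\int[lebesgue_measure]_(t in `[0%R, 1%R]) (beta_integrand p q t)%:E)%E.

Lemma BetaE (p q : R) : Beta R p q = fine (beta_integral p q).
Proof. by []. Qed.

Lemma beta_integrand_ge0 (p q t : R) : 0 <= beta_integrand p q t.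
Proof. by rewrite mulr_ge0 ?powR_ge0. Qed.

Lemma measurable_beta_integrand (p q : R) :
  measurable_fun (`[0%R, 1%R] : set R) (beta_integrand p q).
Proof.
apply: measurable_funM; apply: measurable_funTS.
  exact: measurable_powR.
exact: measurableT_comp (measurable_powR _) (measurable_funB _ _).
Qed.

Lemma beta_integral_ge0 (p q : R) : (0 <= beta_integral p q)%E.
Proof. by apply: integral_ge0 => t _; rewrite lee_fin beta_integrand_ge0. Qed.

(* [Beta] is [fine] of the integral, and [fine] sends +oo to 0. *)
Lemma Beta_neq0_fin_num {p q : R} :
  Beta R p q != 0 -> beta_integral p q \is a fin_num.
Proof. by rewrite BetaE; case: (beta_integral p q) => //=; rewrite eqxx. Qed.

Lemma Beta_neq0_gt0 {p q : R} : Beta R p q != 0 -> 0 < Beta R p q.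
Proof. by move=> B_neq0; rewrite lt0r B_neq0 BetaE fine_ge0 ?beta_integral_ge0. Qed.

Let itv01P (t : R) : `[0%R, 1%R] t -> 0 <= t <= 1.
Proof. by rewrite /= in_itv. Qed.

Variables (rho1 rho0 : R).
Hypotheses (rho1_gt0 : 0 < rho1) (rho0_gt0 : 0 < rho0).

Lemma beta_integrand_shift (a b : nat) (t : R) : 0 <= t <= 1 ->
  beta_integrand (a%:R + rho1) (b%:R + rho0) t
  = t ^+ a * (1 - t) ^+ b * beta_integrand rho1 rho0 t.
Proof.
move=> /andP[t_ge0 t_le1].
by rewrite /beta_integrand !powR_natD ?subr_ge0 //; ring.
Qed.

Lemma beta_integral_shiftE (a b : nat) : beta_integral (a%:R + rho1) (b%:R + rho0)
  = (\int[lebesgue_measure]_(t in `[0%R, 1%R])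
       (t ^+ a * (1 - t) ^+ b * beta_integrand rho1 rho0 t)%R%:E)%E.
Proof.
by apply: eq_integral => t /[!inE] /itv01P t01; rewrite beta_integrand_shift.
Qed.

Lemma beta_integral_shift_le (a b : nat) :
  (beta_integral (a%:R + rho1) (b%:R + rho0) <= beta_integral rho1 rho0)%E.
Proof.
rewrite beta_integral_shiftE; apply: ge0_le_integral => //.
- move=> t /itv01P /andP[t_ge0 t_le1]; rewrite lee_fin.
  by rewrite mulr_ge0 ?beta_integrand_ge0 // mulr_ge0 ?exprn_ge0 // subr_ge0.
- apply/measurable_EFinP/measurable_funM; last exact: measurable_beta_integrand.
  by apply: measurable_funM => //; apply: measurable_funX; exact: measurable_funB.
- by apply/measurable_EFinP; exact: measurable_beta_integrand.
move=> t /itv01P /andP[t_ge0 t_le1]; rewrite lee_fin.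
rewrite ler_piMl ?beta_integrand_ge0 // mulr_ile1 ?exprn_ge0 ?exprn_ile1 ?subr_ge0 //.
lra.
Qed.

Hypothesis Beta_neq0 : Beta R rho1 rho0 != 0.

Lemma EFin_Beta_shift (a b : nat) : (Beta R (a%:R + rho1) (b%:R + rho0))%:E
  = beta_integral (a%:R + rho1) (b%:R + rho0).
Proof.
rewrite BetaE fineK // ge0_fin_numE ?beta_integral_ge0 //.
apply: le_lt_trans (beta_integral_shift_le a b) _.
by rewrite -ge0_fin_numE ?beta_integral_ge0 ?Beta_neq0_fin_num.
Qed.

Lemma l_leaf_unit_interval (a : nat) : 0 <= l_leaf R rho1 rho0 a 0 <= 1.
Proof.
have B0_gt0 := Beta_neq0_gt0 Beta_neq0.
have : ((Beta R (a%:R + rho1) (0%:R + rho0))%:E <= (Beta R rho1 rho0)%:E)%E.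
  by rewrite EFin_Beta_shift BetaE fineK ?Beta_neq0_fin_num ?beta_integral_shift_le.
rewrite lee_fin /l_leaf => Ba0_le_B0.
rewrite ler_pdivrMr // mul1r Ba0_le_B0 andbT divr_ge0 ?(ltW B0_gt0) //.
by rewrite -lee_fin EFin_Beta_shift beta_integral_ge0.
Qed.

Lemma l_leaf_pivot (a b : nat) : exists2 gm : R, 0 <= gm &
  forall t, 0 <= t <= 1 ->
    (t ^+ a - l_leaf R rho1 rho0 a 0) * ((1 - t) ^+ b - gm) <= 0.
Proof.
case: a => [|a].
  by exists 0 => // t _; rewrite expr0 /l_leaf !add0r divff // subrr mul0r.
have [c c01 <-] :=
  exprn_unit_interval_onto a.+1 _ (ltn0Sn a) (l_leaf_unit_interval a.+1).
exists ((1 - c) ^+ b); first by case/andP: c01 => _ c_le1; rewrite exprn_ge0 ?subr_ge0.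
by move=> t t01; exact: powers_oppositely_ordered.
Qed.

Lemma Beta_le_l_leaf_mul (a b : nat) : Beta R (a%:R + rho1) (b%:R + rho0)
  <= l_leaf R rho1 rho0 a 0 * Beta R (0%:R + rho1) (b%:R + rho0).
Proof.
have /andP[l_ge0 _] := l_leaf_unit_interval a.
have mean_l_leaf : ((l_leaf R rho1 rho0 a 0)%:E * beta_integral rho1 rho0
    = \int[lebesgue_measure]_(t in `[0%R, 1%R])
        (t ^+ a * beta_integrand rho1 rho0 t)%R%:E)%E.
  transitivity (beta_integral (a%:R + rho1) (0%:R + rho0)).
    rewrite -EFin_Beta_shift -(fineK (Beta_neq0_fin_num Beta_neq0)) -BetaE -EFinM.
    by rewrite /l_leaf divfK.
  by rewrite beta_integral_shiftE; apply: eq_integral => t _; rewrite expr0 mulr1.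
rewrite -lee_fin EFinM !EFin_Beta_shift !beta_integral_shiftE.
under [X in (_ * X)%E]eq_integral do rewrite expr0 mul1r.
apply: (ge0_integral_le_pivot lebesgue_measure _ (fun t => t ^+ a)
  (fun t => (1 - t) ^+ b)) => //.
- by apply: measurable_funX; exact: measurable_funB.
- exact: measurable_beta_integrand.
- by move=> t /itv01P /andP[t_ge0 _]; rewrite exprn_ge0.
- by move=> t /itv01P /andP[_ t_le1]; rewrite exprn_ge0 ?subr_ge0.
- by move=> t _; exact: beta_integrand_ge0.
- exact: l_leaf_pivot.
- exact: Beta_neq0_fin_num.
Qed.

End beta_integral.

Theorem lemma13 (R : realType) (rho1 rho0 : R) (h1 : 0 < rho1) (h0 : 0 < rho0)
  (a b : nat) :
  @l_leaf R rho1 rho0 a b <= @l_leaf R rho1 rho0 a 0 * @l_leaf R rho1 rho0 0 b.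
Proof.
have [B0_eq0|B0_neq0] := eqVneq (Beta R rho1 rho0) 0.
  by rewrite /l_leaf B0_eq0 invr0 !mulr0.
rewrite {1 3}/l_leaf mulrA ler_wpM2r ?invr_ge0 ?(ltW (Beta_neq0_gt0 B0_neq0)) //.
exact: Beta_le_l_leaf_mul h1 h0 B0_neq0 a b.
Qed.
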